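(* For an arbitrary sequence of instances $\{\mathcal{I}_N\}$ of the binary voting game, let $\Sigma_N$ be a sincere strategy profile in $\mathcal{I}_N$. Then $\lim_{N\to\infty}A(\Sigma_N)=1$ if and only if there is a sequence $\varepsilon_N\to0$ such that for every $N$, $\Sigma_N$ is an $\varepsilon_N$-strong Bayes Nash Equilibrium.
   Context: Binary voting game. An instance has $N$ agents each voting for $\mathbf{A}$ or $\mathbf{R}$. Unobserved world state $W\in\{L,H\}$ with common prior $P_L,P_H>0$. Conditional on $W$, each agent independently receives a signal $S_n\in\{l,h\}$ with $P_{sw}=\Pr[S_n=s\mid W=w]$, $P_{hH}>P_{hL}$, $P_{lH}<P_{lL}$. With threshold $\mu\in(0,1)$, $\mathbf{A}$ wins iff at least $\mu N$ agents vote $\mathbf{A}$, else $\mathbf{R}$ wins. Agent $n$ has utility $v_n:\{L,H\}\times\{\mathbf{A},\mathbf{R}\}\to\{0,\dots,B\}$ ($B$ fixed) with $v_n(H,\mathbf{A})>v_n(L,\mathbf{A})$, $v_n(H,\mathbf{R})<v_n(L,\mathbf{R})$. Every agent is friendly ($v_n(H,\mathbf{A})>v_n(L,\mathbf{A})>v_n(L,\mathbf{R})>v_n(H,\mathbf{R})$), unfriendly ($v_n(L,\mathbf{R})>v_n(H,\mathbf{R})>v_n(H,\mathbf{A})>v_n(L,\mathbf{A})$) or contingent ($v_n(H,\mathbf{A})>v_n(H,\mathbf{R})$, $v_n(L,\mathbf{R})>v_n(L,\mathbf{A})$), with counts $\lfloor\alpha_FN\rfloor$, $\lfloor\alpha_UN\rfloor$,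 rest, for fixed $\alpha$'s summing to 1 with $\alpha_F<\mu$, $\alpha_U<1-\mu$ (informed majority decision: $\mathbf{A}$ in $H$, $\mathbf{R}$ in $L$). A sequence of instances: $\mathcal{I}_N$ has $N$ agents, all share $\mu$, prior, signal distribution, $\alpha$'s; utilities arbitrary. A strategy gives, for each signal, a probability of voting $\mathbf{A}$. Sincere profile: for each agent $n$ and signal $s$, with $u_n(\mathbf{X}\mid s)=\Pr[W=L\mid S_n=s]v_n(L,\mathbf{X})+\Pr[W=H\mid S_n=s]v_n(H,\mathbf{X})$ (posterior by Bayes' rule), agent $n$ on signal $s$ votes $\mathbf{A}$ if $u_n(\mathbf{A}\mid s)>u_n(\mathbf{R}\mid s)$ and $\mathbf{R}$ otherwise. $\lambda^{\mathbf{X}}_w(\Sigma)$: ex-ante probability that $\mathbf{X}$ wins in state $w$. Fidelity $A(\Sigma)=P_L\lambda^{\mathbf{R}}_L(\Sigma)+P_H\lambda^{\mathbf{A}}_H(\Sigma)$. Expected utility $u_n(\Sigma)=\sum_wP_w(\lambda^{\mathbf{A}}_w(\Sigma)v_n(w,\mathbf{A})+\lambda^{\mathbf{R}}_w(\Sigma)v_n(w,\mathbf{R}))$. $\Sigma$ is an $\varepsilon$-strong Bayes Nash Equilibrium if there is no set $D$ of agents and profile $\Sigma'$ with $\sigma'_n=\sigma_n$ for $n\notin D$, $u_n(\Sigma')\ge u_n(\Sigma)$ for all $n\in D$ and $u_n(\Sigma')>u_n(\Sigma)+\varepsilon$ for some $n\in D$. *)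

From mathcomp Require Import all_boot all_order all_algebra.
From mathcomp Require Import all_classical all_reals all_analysis.
Set Implicit Arguments. Unset Strict Implicit. Unset Printing Implicit Defensive.
Import Order.TTheory GRing.Theory Num.Theory.
Local Open Scope ring_scope.

Inductive state := WL | WH.
Inductive outcome := OA | OR.
Inductive signal := sl | sh.

(* a utility function v : {L,H} x {A,R} -> {0..B} (bound checked separately) *)
Definition util := state -> outcome -> nat.

Section Game.
Variable R : realType.

Definition vR (v : util) w x : R := (v w x)%:R.

Definition friendly (v : util) : Prop :=
  vR v WH OA > vR v WL OA /\ vR v WL OA > vR v WL OR /\ vR v WL OR > vR v WH OR.
Definition unfriendly (v : util) : Prop :=
  vR v WL OR > vR v WH OR /\ vR v WH OR > vR v WH OA /\ vR v WH OA > vR v WL OA.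
Definition contingent (v : util) : Prop :=
  vR v WH OA > vR v WH OR /\ vR v WL OR > vR v WL OA.

(* Standing parameters shared by all instances of the sequence:
   threshold mu, prior PL PH, signal distribution Psig s w = Pr[S=s | W=w],
   type proportions aF aU aC. *)
Definition valid_params (mu PL PH : R) (Psig : signal -> state -> R)
  (aF aU aC : R) : Prop :=
  [/\ 0 < mu < 1, [/\ 0 < PL, 0 < PH & PL + PH = 1],
      (forall s w, 0 <= Psig s w) /\
      (forall w, Psig sl w + Psig sh w = 1),
      Psig sh WH > Psig sh WL /\ Psig sl WH < Psig sl WL &
      [/\ 0 <= aF, 0 <= aU, 0 <= aC, aF + aU + aC = 1 &
          aF < mu /\ aU < 1 - mu]].

Definition valid_instance (B : nat) (aF aU : R) (N : nat) (v : 'I_N -> util)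
  : Prop :=
  [/\ (forall n w x, (v n w x <= B)%N),
      (forall n, vR (v n) WH OA > vR (v n) WL OA /\
                 vR (v n) WH OR < vR (v n) WL OR),
      (forall n, friendly (v n) \/ unfriendly (v n) \/ contingent (v n)),
      (#|[set n | `[< friendly (v n) >]]|%:R : R)
         = (Num.floor (aF * N%:R))%:~R &
      (#|[set n | `[< unfriendly (v n) >]]|%:R : R)
         = (Num.floor (aU * N%:R))%:~R].

Definition prior (PL PH : R) (w : state) : R :=
  match w with WL => PL | WH => PH end.

(* a strategy: for each signal, the probability of voting A *)
Definition strategy := signal -> R.
Definition is_strategy (sg : strategy) : Prop := forall s, 0 <= sg s <= 1.

Definition posterior (PL PH : R) (Psig : signal -> state -> R)
  (s : signal) (w : state) : R :=
  prior PL PH w * Psig s w / (PL * Psig s WL + PH * Psig s WH).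

Definition interim_u (PL PH : R) Psig (v : util) (x : outcome) (s : signal) : R :=
  posterior PL PH Psig s WL * vR v WL x + posterior PL PH Psig s WH * vR v WH x.

Definition is_sincere (PL PH : R) Psig N (v : 'I_N -> util)
  (Sg : 'I_N -> strategy) : Prop :=
  forall n s, Sg n s = if interim_u PL PH Psig (v n) OA s >
                          interim_u PL PH Psig (v n) OR s then 1 else 0.

Definition voteA_prob Psig (sg : strategy) (w : state) : R :=
  Psig sl w * sg sl + Psig sh w * sg sh.

Definition pr_voters Psig N (Sg : 'I_N -> strategy) (w : state)
  (S : {set 'I_N}) : R :=
  \prod_(n in S) voteA_prob Psig (Sg n) w *
  \prod_(n in ~: S) (1 - voteA_prob Psig (Sg n) w).

Definition lambda (mu : R) Psig N (Sg : 'I_N -> strategy) (x : outcome)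
  (w : state) : R :=
  match x with
  | OA => \sum_(S : {set 'I_N} | mu * N%:R <= #|S|%:R) pr_voters Psig Sg w S
  | OR => \sum_(S : {set 'I_N} | #|S|%:R < mu * N%:R) pr_voters Psig Sg w S
  end.

Definition fidelity mu PL PH Psig N (Sg : 'I_N -> strategy) : R :=
  PL * lambda mu Psig Sg OR WL + PH * lambda mu Psig Sg OA WH.

Definition exp_util mu PL PH Psig N (Sg : 'I_N -> strategy) (v : util) : R :=
  \sum_(w <- [:: WL; WH])
     prior PL PH w * (lambda mu Psig Sg OA w * vR v w OA +
                      lambda mu Psig Sg OR w * vR v w OR).

Definition strong_BNE (eps : R) mu PL PH Psig N (v : 'I_N -> util)
  (Sg : 'I_N -> strategy) : Prop :=
  ~ exists (D : {set 'I_N}) (Sg' : 'I_N -> strategy),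
      [/\ (forall n, is_strategy (Sg' n)),
          (forall n s, n \notin D -> Sg' n s = Sg n s),
          (forall n, n \in D ->
             exp_util mu PL PH Psig Sg' (v n) >= exp_util mu PL PH Psig Sg (v n)) &
          (exists2 n, n \in D &
             exp_util mu PL PH Psig Sg' (v n) > exp_util mu PL PH Psig Sg (v n) + eps)].

End Game.

(* Under sincere voting friendly agents always vote A and unfriendly agents
   always vote R, and the outcome in state w is a threshold event for
   independent Bernoulli votes.

   If the fidelity A is close to 1, a deviating coalition changes the winning
   probabilities in the two states by shifts x (state L) and y (state H), and a
   member's gain is x (v(L,A) - v(L,R)) + y (v(H,A) - v(H,R)).  The weak gains
   of the members force |x|, |y| <= B (1 - A): with a contingent member this is
   direct, and otherwise the members' gains, together with the monotonicity of
   the winning probability in the vote probabilities, force x <= 0 <= y.  Hence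
   no member gains more than 2 B^2 (1 - A).

   Conversely, let all contingent agents vote A with a probability centred at
   the pivotal share (mu - aF) / aC and tilted towards signal h.  The expected
   number of A votes is then (mu -+ margin) N in states L and H, so by
   Chebyshev's inequality the wrong outcome has probability at most
   1 / (margin^2 N), and every contingent agent gains at least
   (1 - A) - B / (margin^2 N).  An eps-strong equilibrium therefore has
   1 - A <= |eps| + B / (margin^2 N). *)

From mathcomp Require Import all_boot all_order all_algebra.
From mathcomp Require Import all_classical all_reals all_analysis.
From mathcomp Require Import ring lra.
Import Order.TTheory GRing.Theory Num.Theory.
Local Open Scope ring_scope.
Set Implicit Arguments. Unset Strict Implicit. Unset Printing Implicit Defensive.

Section ProductBernoulli.
Variables (R : realFieldType) (N : nat).
Implicit Types (q : 'I_N -> R) (g h : {set 'I_N} -> R) (S T K : {set 'I_N}) (m : 'I_N).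

(* [pr_voters Psig Sg w] is [pr_bern] for the vote probabilities in state [w]. *)
Definition pr_bern q S : R := \prod_(n in S) q n * \prod_(n in ~: S) (1 - q n).

Definition E_bern q g : R := \sum_S pr_bern q S * g S.

Lemma pr_bernE q S : pr_bern q S = \prod_n (if n \in S then q n else 1 - q n).
Proof.
rewrite /pr_bern (bigID (mem S) predT) /=; congr (_ * _); first by apply: eq_bigr => n ->.
rewrite (eq_bigl (fun n => n \notin S)) => [|n]; last by rewrite inE.
by apply: eq_bigr => n /negbTE ->.
Qed.

Lemma pr_bern_ge0 q S : (forall n, 0 <= q n <= 1) -> 0 <= pr_bern q S.
Proof.
move=> q01; rewrite pr_bernE; apply: prodr_ge0 => n _.
by have /andP[? ?] := q01 n; case: (n \in S); rewrite ?subr_ge0.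
Qed.

Lemma E_bern_subset q K : E_bern q (fun S => (K \subset S)%:R) = \prod_(n in K) q n.
Proof.
transitivity (\sum_(S : {set 'I_N}) \prod_n
    (if n \in S then q n else if n \in K then 0 else 1 - q n)).
  apply: eq_bigr => S _; rewrite pr_bernE.
  have [/fintype.subsetP KS|/fintype.subsetPn[k kK kS]] := boolP (K \subset S).
    rewrite mulr1; apply: eq_bigr => n _.
    by case: ifPn => // nS; rewrite ifF //; apply: contraNF nS => /KS.
  by rewrite mulr0 (bigD1 k) //= (negbTE kS) kK mul0r.
rewrite -bigA_distr (bigID (mem K) predT) /= [X in _ * X]big1 ?mulr1.
  by apply: eq_bigr => n ->; rewrite addr0.
by move=> n /negbTE ->; rewrite subrKC.
Qed.

Lemma sum_pr_bern q : \sum_S pr_bern q S = 1.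
Proof.
have := E_bern_subset q finset.set0; rewrite big_set0 => <-.
by apply: eq_bigr => S _; rewrite finset.sub0set mulr1.
Qed.

Lemma E_bern_cst q c : E_bern q (fun=> c) = c.
Proof. by rewrite /E_bern -mulr_suml sum_pr_bern mul1r. Qed.

Lemma eq_E_bern q g h : (forall S, g S = h S) -> E_bern q g = E_bern q h.
Proof. by move=> gh; apply: eq_bigr => S _; rewrite gh. Qed.

Lemma E_bernD q g h : E_bern q (fun S => g S + h S) = E_bern q g + E_bern q h.
Proof. by rewrite /E_bern -big_split; apply: eq_bigr => S _; rewrite mulrDr. Qed.

Lemma E_bernZ q c g : E_bern q (fun S => c * g S) = c * E_bern q g.
Proof. by rewrite /E_bern mulr_sumr; apply: eq_bigr => S _; rewrite mulrCA. Qed.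

Lemma E_bernB q g h : E_bern q (fun S => g S - h S) = E_bern q g - E_bern q h.
Proof.
rewrite -mulN1r -E_bernZ -E_bernD.
by apply: eq_bigr => S _; rewrite mulN1r.
Qed.

Lemma E_bern_sum q (I : finType) (F : I -> {set 'I_N} -> R) :
  E_bern q (fun S => \sum_i F i S) = \sum_i E_bern q (F i).
Proof.
rewrite /E_bern exchange_big /=; apply: eq_bigr => S _.
by rewrite mulr_sumr.
Qed.

Lemma ler_E_bern q g h : (forall n, 0 <= q n <= 1) ->
  (forall S, g S <= h S) -> E_bern q g <= E_bern q h.
Proof.
move=> q01 gh; apply: ler_sum => S _.
by apply: ler_wpM2l; [exact: pr_bern_ge0|exact: gh].
Qed.

Lemma card_sum_mem S : (#|S|%:R : R) = \sum_m ((m \in S)%:R : R).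
Proof.
rewrite -sum1_card natr_sum big_mkcond /=.
by apply: eq_bigr => m _; case: (m \in S).
Qed.

Lemma E_bern_mem q m : E_bern q (fun S => (m \in S)%:R) = q m.
Proof.
have := E_bern_subset q [set m]; rewrite big_set1 => <-.
by apply: eq_E_bern => S; rewrite finset.sub1set.
Qed.

Lemma E_bern_card q : E_bern q (fun S => #|S|%:R) = \sum_n q n.
Proof.
rewrite (eq_E_bern _ card_sum_mem) E_bern_sum.
by apply: eq_bigr => m _; rewrite E_bern_mem.
Qed.

Lemma E_bern_card_sqr q :
  E_bern q (fun S => #|S|%:R ^+ 2) = (\sum_n q n) ^+ 2 + \sum_n q n * (1 - q n).
Proof.
have card_sqr S : (#|S|%:R ^+ 2 : R) =
    \sum_m \sum_k (([set m; k] \subset S)%:R : R).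
  rewrite expr2 card_sum_mem mulr_suml; apply: eq_bigr => m _.
  rewrite mulr_sumr; apply: eq_bigr => k _.
  by rewrite -natrM finset.subUset !finset.sub1set; case: (m \in S); case: (k \in S).
rewrite (eq_E_bern _ card_sqr) E_bern_sum expr2 mulr_suml -big_split /=.
apply: eq_bigr => m _; rewrite E_bern_sum mulr_sumr.
rewrite (bigD1 m) //= [in RHS](bigD1 m) //= finset.setUid E_bern_subset big_set1.
under eq_bigr => k km.
  rewrite E_bern_subset big_setU1 ?big_set1 ?inE 1?eq_sym //.
  over.
by ring.
Qed.

Lemma E_bern_card_var q :
  E_bern q (fun S => (#|S|%:R - \sum_n q n) ^+ 2) = \sum_n q n * (1 - q n).
Proof.
set M := \sum_n q n.
have -> : E_bern q (fun S => (#|S|%:R - M) ^+ 2) =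
    E_bern q (fun S => #|S|%:R ^+ 2) - (2 * M) * E_bern q (fun S => #|S|%:R)
    + E_bern q (fun=> M ^+ 2).
  rewrite -E_bernZ -E_bernB -E_bernD; apply: eq_bigr => S _; congr (_ * _); ring.
by rewrite E_bern_card_sqr E_bern_card E_bern_cst -/M; ring.
Qed.

Lemma E_bern_chebyshev q (t : R) : (forall n, 0 <= q n <= 1) -> 0 < t ->
  E_bern q (fun S => if t <= `|#|S|%:R - \sum_n q n| then 1 else 0)
    <= (\sum_n q n * (1 - q n)) / t ^+ 2.
Proof.
move=> q01 t0; rewrite ler_pdivlMr ?exprn_gt0 // -E_bern_card_var mulrC -E_bernZ.
apply: ler_E_bern => // S; case: ifPn => [tS|_]; last by rewrite mulr0 sqr_ge0.
by rewrite mulr1 -[X in _ <= X]real_normK ?num_real // ler_sqr ?nnegrE // ltW.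
Qed.

Lemma pr_bernD1 q m S : pr_bern q S = (if m \in S then q m else 1 - q m) *
  \prod_(n | n != m) (if n \in S then q n else 1 - q n).
Proof. by rewrite pr_bernE (bigD1 m). Qed.

Lemma E_bern_split q m g : E_bern q g =
  q m * E_bern [eta q with m |-> 1] g + (1 - q m) * E_bern [eta q with m |-> 0] g.
Proof.
rewrite /E_bern !mulr_sumr -big_split; apply: eq_bigr => S _ /=.
rewrite !(pr_bernD1 _ m) /= eqxx.
have others c : \prod_(n | n != m)
    (if n \in S then [eta q with m |-> c] n else 1 - [eta q with m |-> c] n)
  = \prod_(n | n != m) (if n \in S then q n else 1 - q n).
  by apply: eq_bigr => n /negbTE /= ->.
rewrite !others; set P := \prod_(n | _) _; case: (m \in S); ring.
Qed.

Lemma E_bern_set0_le_set1 q m g : (forall n, 0 <= q n <= 1) ->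
  (forall S T, S \subset T -> g S <= g T) ->
  E_bern [eta q with m |-> 0] g <= E_bern [eta q with m |-> 1] g.
Proof.
move=> q01 g_mono.
(* Toggling [m] pairs each set containing [m] with the same set without it. *)
pose tog S := if m \in S then S :\ m else m |: S.
have togK : involutive tog.
  move=> S; rewrite /tog; case: (boolP (m \in S)) => mS.
    by rewrite !inE eqxx /= finset.setD1K.
  by rewrite finset.setU11 finset.setU1K.
rewrite /E_bern [X in _ <= X](reindex_inj (inv_inj togK)) /=.
apply: ler_sum => S _; rewrite /tog !(pr_bernD1 _ m) /= eqxx.
case: (boolP (m \in S)) => mS; first by rewrite !inE eqxx /= subrr !mul0r.
rewrite finset.setU11 subr0 !mul1r.
set P := \prod_(n | n != m) _; set P' := \prod_(n | n != m) _.
have -> : P' = P.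
  by apply: eq_bigr => n nm; rewrite finset.in_setU1 /= !(negbTE nm).
rewrite ler_wpM2l ?g_mono ?finset.subsetUr // /P.
apply: prodr_ge0 => n nm; have /andP[? ?] := q01 n.
by rewrite (negbTE nm); case: (n \in S); rewrite ?subr_ge0.
Qed.

Lemma E_bern_set_mono q m c g : (forall n, 0 <= q n <= 1) ->
  (forall S T, S \subset T -> g S <= g T) -> q m <= c <= 1 ->
  E_bern q g <= E_bern [eta q with m |-> c] g.
Proof.
move=> q01 g_mono /andP[qc c1].
have reset d :
  [eta [eta q with m |-> c] with m |-> d] = [eta q with m |-> d] :> ('I_N -> R).
  by apply/funext => n /=; case: eqP.
rewrite (E_bern_split q m) (E_bern_split [eta q with m |-> c] m) !reset /= eqxx.
have := E_bern_set0_le_set1 m q01 g_mono; nra.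
Qed.

Lemma E_bern_mono q q' g : (forall n, 0 <= q n <= q' n) -> (forall n, q' n <= 1) ->
  (forall S T, S \subset T -> g S <= g T) -> E_bern q g <= E_bern q' g.
Proof.
move=> qq' q'1 g_mono; pose mix j (n : 'I_N) := if (n < j)%N then q' n else q n.
have mix01 j n : 0 <= mix j n <= 1.
  have /andP[q0 qq'n] := qq' n; rewrite /mix.
  by case: ifP => _; rewrite ?q'1 ?(le_trans q0 qq'n) ?q0 ?(le_trans qq'n (q'1 n)).
have mixN : mix N = q' by apply/funext => n; rewrite /mix ltn_ord.
have mix0 : mix 0%N = q by apply/funext => n.
suff /(_ N) : forall j, E_bern q g <= E_bern (mix j) g by rewrite mixN.
elim=> [|j IHj]; first by rewrite mix0.
have [jN|Nj] := ltnP j N; last first.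
  have -> // : mix j.+1 = mix j.
  by apply/funext => n; rewrite /mix !(leq_trans (ltn_ord n)) // ltnW.
have -> : mix j.+1 = [eta mix j with Ordinal jN |-> q' (Ordinal jN)] :> ('I_N -> R).
  apply/funext => n /=; rewrite /mix ltnS leq_eqVlt -val_eqE /=.
  by case: eqP => // nj; congr q'; apply: val_inj.
apply: le_trans IHj (E_bern_set_mono (mix01 j) g_mono _).
by rewrite /mix ltnn /= (andP (qq' _)).2 q'1.
Qed.

End ProductBernoulli.

Lemma ltr_nat_subr_ge1 (R : numDomainType) (m n : nat) :
  (m%:R < n%:R :> R) -> 1 <= n%:R - m%:R :> R.
Proof. by rewrite ltr_nat => mn; rewrite lerBrDr addrC natr1 ler_nat. Qed.

Lemma contingent_gain_bounds (R : realFieldType) (B d x y c e : R) :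
  1 <= B -> 0 <= d -> -d <= x -> y <= d -> -B <= c <= -1 -> 1 <= e <= B ->
  0 <= x * c + y * e -> `|x| <= B * d /\ `|y| <= B * d.
Proof.
move=> B1 d0 xd yd /andP[Bc c1] /andP[e1 eB] gain.
have Bd : d <= B * d by nra.
rewrite !ler_norml; split; apply/andP; split; nra.
Qed.
Lemma opposite_gains_signs (R : realFieldType) (x y cf ef cu eu : R) :
  0 < cf < ef -> cu < eu < 0 -> 0 <= x * cf + y * ef -> 0 <= x * cu + y * eu ->
  x <= 0 <= y.
Proof.
move=> /andP[cf0 cfe] /andP[cue eu0] gf gu.
have det_lt0 : cu * ef - cf * eu < 0 by nra.
have ef0 : 0 <= ef by rewrite ltW // (lt_trans cf0).
have neu0 : 0 <= - eu by rewrite oppr_ge0 ltW.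
have ncu0 : 0 <= - cu by rewrite oppr_ge0 ltW // (lt_trans cue).
have x_det : 0 <= x * (cu * ef - cf * eu).
  by have := mulr_ge0 ef0 gu; have := mulr_ge0 neu0 gf; lra.
have y_det : 0 <= y * - (cu * ef - cf * eu).
  by have := mulr_ge0 (ltW cf0) gu; have := mulr_ge0 ncu0 gf; lra.
rewrite (nmulr_lge0 _ det_lt0) in x_det.
have ndet : 0 < - (cu * ef - cf * eu) by rewrite oppr_gt0.
by rewrite x_det -(pmulr_lge0 y ndet).
Qed.

Lemma gain_ge0_shift_ge0 (R : realFieldType) (x y c e : R) :
  x <= 0 -> 0 < c -> 0 < e -> 0 <= x * c + y * e -> 0 <= y.
Proof.
move=> x0 c0 e0 gain; rewrite -(pmulr_lge0 _ e0).
by have := mulr_le0_ge0 x0 (ltW c0); lra.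
Qed.

Lemma gain_ge0_shift_le0 (R : realFieldType) (x y c e : R) :
  0 <= y -> c < 0 -> e < 0 -> 0 <= x * c + y * e -> x <= 0.
Proof.
move=> y0 c0 e0 gain; rewrite -oppr_ge0.
apply: (@gain_ge0_shift_ge0 _ (- y) _ (- e) (- c)); rewrite ?oppr_le0 ?oppr_gt0 //.
by rewrite !mulrNN addrC.
Qed.

Lemma gain_le (R : realFieldType) (B d x y c e : R) :
  `|x| <= B * d -> `|y| <= B * d -> `|c| <= B -> `|e| <= B ->
  x * c + y * e <= 2 * B ^+ 2 * d.
Proof.
move=> xB yB cB eB.
have xc : x * c <= B * d * B by apply: le_trans (ler_norm _) _; rewrite normrM ler_pM.
have ye : y * e <= B * d * B by apply: le_trans (ler_norm _) _; rewrite normrM ler_pM.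
lra.
Qed.

Lemma friendly_not_unfriendly (R : realType) (u : util) :
  friendly R u -> ~ unfriendly R u.
Proof. by move=> [? [? ?]] [? [? ?]]; lra. Qed.

Lemma friendly_not_contingent (R : realType) (u : util) :
  friendly R u -> ~ contingent R u.
Proof. by move=> [? [? ?]] [? ?]; lra. Qed.

Lemma unfriendly_not_contingent (R : realType) (u : util) :
  unfriendly R u -> ~ contingent R u.
Proof. by move=> [? [? ?]] [? ?]; lra. Qed.

Section VotingGame.
Variables (R : realType) (mu PL PH : R) (Psig : signal -> state -> R) (aF aU aC : R).
Hypothesis hpar : valid_params mu PL PH Psig aF aU aC.

Let PL_gt0 : 0 < PL. Proof. by case: hpar => _ []. Qed.
Let PH_gt0 : 0 < PH. Proof. by case: hpar => _ []. Qed.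
Let PLH : PL + PH = 1. Proof. by case: hpar => _ []. Qed.
Let Psig_ge0 s w : 0 <= Psig s w. Proof. by case: hpar => _ _ []. Qed.
Let Psig_sum w : Psig sl w + Psig sh w = 1. Proof. by case: hpar => _ _ []. Qed.

Local Notation lamA Sg w := (lambda mu Psig Sg OA w).
Local Notation prefL u := (vR R u WL OA - vR R u WL OR).
Local Notation prefH u := (vR R u WH OA - vR R u WH OR).

Lemma voteA_prob_ge0_le1 (sg : strategy R) w :
  is_strategy sg -> 0 <= voteA_prob Psig sg w <= 1.
Proof.
move=> sg01; rewrite /voteA_prob.
have /andP[? ?] := sg01 sl; have /andP[? ?] := sg01 sh.
have := Psig_ge0 sl w; have := Psig_ge0 sh w; have := Psig_sum w.
by move=> ? ? ?; apply/andP; split; nra.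
Qed.

Definition A_wins N (S : {set 'I_N}) : R := if mu * N%:R <= #|S|%:R then 1 else 0.

Lemma A_wins_mono N (S T : {set 'I_N}) : S \subset T -> A_wins S <= A_wins T.
Proof.
move=> ST; rewrite /A_wins; case: ifP => [winS|_]; last by case: ifP.
by rewrite ifT // (le_trans winS) // ler_nat subset_leq_card.
Qed.

Lemma lambda_OAE N (Sg : 'I_N -> strategy R) w :
  lamA Sg w = E_bern (fun n => voteA_prob Psig (Sg n) w) (@A_wins N).
Proof.
rewrite /lambda /E_bern big_mkcond; apply: eq_bigr => S _.
by rewrite /A_wins; case: ifP; rewrite ?mulr1 ?mulr0.
Qed.

Lemma lambda_ORE N (Sg : 'I_N -> strategy R) w :
  lambda mu Psig Sg OR w = 1 - lamA Sg w.
Proof.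
transitivity (E_bern (fun n => voteA_prob Psig (Sg n) w) (fun S => 1 - A_wins S)).
  rewrite /lambda /E_bern big_mkcond; apply: eq_bigr => S _.
  by rewrite /A_wins ltNge; case: (_ <= _); rewrite /= ?subrr ?subr0 ?mulr0 ?mulr1.
by rewrite (E_bernB _ (fun=> 1)) E_bern_cst lambda_OAE.
Qed.

Lemma lambda_OA_ge0_le1 N (Sg : 'I_N -> strategy R) w :
  (forall n, is_strategy (Sg n)) -> 0 <= lamA Sg w <= 1.
Proof.
move=> Sg01; have q01 n := voteA_prob_ge0_le1 w (Sg01 n).
rewrite lambda_OAE; set q := fun n => _.
apply/andP; split; [rewrite -(E_bern_cst q 0)|rewrite -(E_bern_cst q 1)];
  by apply: ler_E_bern => // S; rewrite /A_wins; case: ifP.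
Qed.

Lemma fidelity_error N (Sg : 'I_N -> strategy R) :
  1 - fidelity mu PL PH Psig Sg = PL * lamA Sg WL + PH * (1 - lamA Sg WH).
Proof. by rewrite /fidelity lambda_ORE; have := PLH; lra. Qed.

Lemma fidelity_le1 N (Sg : 'I_N -> strategy R) :
  (forall n, is_strategy (Sg n)) -> fidelity mu PL PH Psig Sg <= 1.
Proof.
move=> Sg01; rewrite -subr_ge0 fidelity_error.
have /andP[? ?] := lambda_OA_ge0_le1 WL Sg01.
have /andP[? ?] := lambda_OA_ge0_le1 WH Sg01.
by apply: addr_ge0; apply: mulr_ge0; rewrite ?subr_ge0 // ltW.
Qed.

Lemma exp_util_sub N (Sg Sg' : 'I_N -> strategy R) (u : util) :
  exp_util mu PL PH Psig Sg' u - exp_util mu PL PH Psig Sg u =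
    PL * (lamA Sg' WL - lamA Sg WL) * prefL u + PH * (lamA Sg' WH - lamA Sg WH) * prefH u.
Proof. by rewrite /exp_util !big_cons !big_nil !lambda_ORE /=; ring. Qed.

Lemma interim_u_sub (u : util) s :
  interim_u PL PH Psig u OA s - interim_u PL PH Psig u OR s =
    posterior PL PH Psig s WL * prefL u + posterior PL PH Psig s WH * prefH u.
Proof. by rewrite /interim_u; ring. Qed.

Lemma posterior_convex s :
  [/\ 0 <= posterior PL PH Psig s WL, 0 <= posterior PL PH Psig s WH
     & posterior PL PH Psig s WL + posterior PL PH Psig s WH = 1].
Proof.
have evidence_gt0 : 0 < PL * Psig s WL + PH * Psig s WH.
  case: hpar => _ _ _ [hh lh] _; case: s.
    have := mulr_gt0 PL_gt0 (le_lt_trans (Psig_ge0 sl WH) lh).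
    have := mulr_ge0 (ltW PH_gt0) (Psig_ge0 sl WH); lra.
  have := mulr_gt0 PH_gt0 (le_lt_trans (Psig_ge0 sh WL) hh).
  have := mulr_ge0 (ltW PL_gt0) (Psig_ge0 sh WL); lra.
have ge0 w : 0 <= prior PL PH w * Psig s w.
  by case: w; rewrite mulr_ge0 // ltW.
rewrite /posterior; split; rewrite ?divr_ge0 ?ge0 ?(ltW evidence_gt0) //=.
by rewrite -mulrDl divff // gt_eqF.
Qed.

Lemma friendly_prefers_A (u : util) s : friendly R u ->
  interim_u PL PH Psig u OR s < interim_u PL PH Psig u OA s.
Proof.
move=> [? [? ?]]; rewrite -subr_gt0 interim_u_sub.
by have [? ? ?] := posterior_convex s; nra.
Qed.

Lemma unfriendly_prefers_R (u : util) s : unfriendly R u ->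
  interim_u PL PH Psig u OA s < interim_u PL PH Psig u OR s.
Proof.
move=> [? [? ?]]; rewrite -subr_lt0 interim_u_sub.
by have [? ? ?] := posterior_convex s; nra.
Qed.

(* If the contingent agents use [separating_strategy], the expected share of A
   votes is [mu -+ 2 margin] in states L and H (separating_share).  The factors
   [pivot_share] and [1 - pivot_share] of [spread] keep the two voting
   probabilities in [0, 1]. *)
Definition pivot_share : R := (mu - aF) / aC.

Definition spread : R := pivot_share * (1 - pivot_share).

Definition separating_strategy : strategy R := fun s =>
  pivot_share + spread * ((if s is sh then 1 else 0) - (Psig sh WL + Psig sh WH) / 2).

Definition margin : R := aC * spread * (Psig sh WH - Psig sh WL) / 4.

Let aC_gt0 : 0 < aC.
Proof. by case: hpar => _ _ _ _ [? ? ? ? [? ?]]; lra. Qed.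

Let Psh_gap : 0 < Psig sh WH - Psig sh WL.
Proof. by case: hpar => _ _ _ [? _] _; rewrite subr_gt0. Qed.

Lemma pivot_share_gt0_lt1 : 0 < pivot_share < 1.
Proof.
case: hpar => _ _ _ _ [? ? ? ? [? ?]].
by rewrite divr_gt0 ?ltr_pdivrMr ?subr_gt0 // mul1r; lra.
Qed.

Lemma margin_gt0 : 0 < margin.
Proof.
have /andP[? ?] := pivot_share_gt0_lt1.
rewrite /margin /spread divr_gt0 // mulr_gt0 ?Psh_gap // mulr_gt0 ?aC_gt0 //.
by rewrite mulr_gt0 ?subr_gt0.
Qed.

Lemma separating_strategyP : is_strategy separating_strategy.
Proof.
have /andP[t0 t1] := pivot_share_gt0_lt1.
have Psh01 w : 0 <= Psig sh w <= 1.
  have := Psig_ge0 sl w; have := Psig_ge0 sh w; have := Psig_sum w.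
  by move=> *; apply/andP; split; lra.
have /andP[m0 m1] : 0 <= (Psig sh WL + Psig sh WH) / 2 <= 1.
  by move: (Psh01 WL) (Psh01 WH) => /andP[? ?] /andP[? ?]; apply/andP; split; lra.
rewrite /separating_strategy /spread; move: t0 t1 m0 m1.
set t := pivot_share; set m := _ / 2 => t0 t1 m0 m1.
have : 0 <= t * (1 - t) <= t by apply/andP; split; nra.
have : t * (1 - t) <= 1 - t by nra.
set d := t * (1 - t) => d_le /andP[d0 dt].
by case; apply/andP; split; nra.
Qed.

Lemma voteA_separating w : voteA_prob Psig separating_strategy w =
  pivot_share + spread * (Psig sh w - (Psig sh WL + Psig sh WH) / 2).
Proof.
rewrite /voteA_prob /separating_strategy.
have -> : Psig sl w = 1 - Psig sh w by rewrite -(Psig_sum w) addrK.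
by ring.
Qed.

Lemma separating_share w : aF + aC * voteA_prob Psig separating_strategy w =
  mu + (if w is WH then 2 * margin else - (2 * margin)).
Proof.
have tE : aC * pivot_share = mu - aF.
  by rewrite /pivot_share mulrCA divff ?mulr1 // gt_eqF.
by rewrite voteA_separating /margin mulrDr tE; case: w; field.
Qed.

Section SincereProfile.
Variables (B N : nat) (v : 'I_N -> util) (Sg : 'I_N -> strategy R).
Hypotheses (hv : valid_instance B aF aU v) (hS : is_sincere PL PH Psig v Sg).
Implicit Types n : 'I_N.

Let vR_ge0_leB n w x : 0 <= vR R (v n) w x <= B%:R.
Proof. by case: hv => vB _ _ _ _; rewrite /vR ler0n ler_nat vB. Qed.

Let agent_types n : friendly R (v n) \/ unfriendly R (v n) \/ contingent R (v n).
Proof. by case: hv. Qed.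

Let B_ge1 n : 1 <= B%:R :> R.
Proof.
case: hv => _ /(_ n)[/ltr_nat_subr_ge1 ? _] _ _ _.
by have := vR_ge0_leB n WL OA; have := vR_ge0_leB n WH OA; lra.
Qed.

Let pref_le n : `|prefL (v n)| <= B%:R /\ `|prefH (v n)| <= B%:R.
Proof.
have := vR_ge0_leB n WL OA; have := vR_ge0_leB n WL OR.
have := vR_ge0_leB n WH OA; have := vR_ge0_leB n WH OR.
by rewrite !ler_norml; move=> /andP[? ?] /andP[? ?] /andP[? ?] /andP[? ?]; split; lra.
Qed.

Lemma sincere_is_strategy n : is_strategy (Sg n).
Proof. by move=> s; rewrite hS; case: ifP; rewrite ?ler01 ?lexx. Qed.

Lemma voteA_sincere_friendly n w : friendly R (v n) -> voteA_prob Psig (Sg n) w = 1.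
Proof.
move=> vF; rewrite /voteA_prob !hS !ifT ?mulr1 ?Psig_sum //.
all: exact: friendly_prefers_A.
Qed.

Lemma voteA_sincere_unfriendly n w : unfriendly R (v n) -> voteA_prob Psig (Sg n) w = 0.
Proof.
move=> vU; rewrite /voteA_prob !hS !ifF ?mulr0 ?addr0 //.
all: by apply/negbTE; rewrite -leNgt ltW // unfriendly_prefers_R.
Qed.

Definition agents (P : util -> Prop) : {set 'I_N} := [set n | `[< P (v n) >]].

Local Notation F := (agents (friendly R)).
Local Notation U := (agents (unfriendly R)).
Local Notation C := (agents (contingent R)).

Let mem_agents (P : util -> Prop) n : P (v n) -> n \in agents P.
Proof. by move=> Pn; rewrite inE asboolT. Qed.

Let nmem_agents (P : util -> Prop) n : ~ P (v n) -> (n \in agents P) = false.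
Proof. by move=> Pn; rewrite inE asboolF. Qed.

Lemma agent_type_indicator n :
  ((n \in F)%:R + (n \in U)%:R + (n \in C)%:R : R) = 1.
Proof.
case: (agent_types n) => [nF|[nU|nC]].
- rewrite (mem_agents nF) (nmem_agents (friendly_not_unfriendly nF)).
  by rewrite (nmem_agents (friendly_not_contingent nF)) !addr0.
- rewrite (mem_agents nU) (nmem_agents (fun nF => friendly_not_unfriendly nF nU)).
  by rewrite (nmem_agents (unfriendly_not_contingent nU)) addr0 add0r.
- rewrite (mem_agents nC) (nmem_agents (fun nF => friendly_not_contingent nF nC)).
  by rewrite (nmem_agents (fun nU => unfriendly_not_contingent nU nC)) !add0r.
Qed.

Section Coalition.
Variables (D : {set 'I_N}) (Sg' : 'I_N -> strategy R).
Hypotheses (Sg'_strat : forall n, is_strategy (Sg' n))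
  (Sg'_out : forall n s, n \notin D -> Sg' n s = Sg n s)
  (Sg'_weak : forall n, n \in D ->
     exp_util mu PL PH Psig Sg (v n) <= exp_util mu PL PH Psig Sg' (v n)).

Local Notation err := (1 - fidelity mu PL PH Psig Sg).
Local Notation shiftL := (PL * (lamA Sg' WL - lamA Sg WL)).
Local Notation shiftH := (PH * (lamA Sg' WH - lamA Sg WH)).

Let voteA_out n w : n \notin D -> voteA_prob Psig (Sg' n) w = voteA_prob Psig (Sg n) w.
Proof. by move=> nD; rewrite /voteA_prob !Sg'_out. Qed.

Let member_gain n : n \in D -> 0 <= shiftL * prefL (v n) + shiftH * prefH (v n).
Proof. by move=> nD; rewrite -exp_util_sub subr_ge0 Sg'_weak. Qed.

Let shift_err : - err <= shiftL /\ shiftH <= err.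
Proof.
rewrite fidelity_error.
have /andP[? ?] := lambda_OA_ge0_le1 WL sincere_is_strategy.
have /andP[? ?] := lambda_OA_ge0_le1 WH sincere_is_strategy.
have /andP[? ?] := lambda_OA_ge0_le1 WL Sg'_strat.
have /andP[? ?] := lambda_OA_ge0_le1 WH Sg'_strat.
by have := PL_gt0; have := PH_gt0; split; nra.
Qed.

Lemma friendly_coalition_shiftL :
  (forall n, n \in D -> friendly R (v n)) -> shiftL <= 0.
Proof.
move=> DF; rewrite pmulr_rle0 // subr_le0 !lambda_OAE.
apply: E_bern_mono => [n|n|]; last exact: A_wins_mono.
  have /andP[-> _] /= := voteA_prob_ge0_le1 WL (Sg'_strat n).
  have [nD|nD] := boolP (n \in D); last by rewrite voteA_out.
  rewrite voteA_sincere_friendly; last exact: DF.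
  by case/andP: (voteA_prob_ge0_le1 WL (Sg'_strat n)) => _ ->.
by case/andP: (voteA_prob_ge0_le1 WL (sincere_is_strategy n)) => _ ->.
Qed.

Lemma unfriendly_coalition_shiftH :
  (forall n, n \in D -> unfriendly R (v n)) -> 0 <= shiftH.
Proof.
move=> DU; rewrite pmulr_rge0 // subr_ge0 !lambda_OAE.
apply: E_bern_mono => [n|n|]; last exact: A_wins_mono.
  have /andP[-> _] /= := voteA_prob_ge0_le1 WH (sincere_is_strategy n).
  have [nD|nD] := boolP (n \in D); last by rewrite voteA_out.
  rewrite voteA_sincere_unfriendly; last exact: DU.
  by case/andP: (voteA_prob_ge0_le1 WH (Sg'_strat n)) => ->.
by case/andP: (voteA_prob_ge0_le1 WH (Sg'_strat n)) => _ ->.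
Qed.

Lemma coalition_shift_bounds n0 : n0 \in D ->
  `|shiftL| <= B%:R * err /\ `|shiftH| <= B%:R * err.
Proof.
move=> n0D; have [xd yd] := shift_err; have B1 := B_ge1 n0.
have err0 : 0 <= err by rewrite subr_ge0 fidelity_le1 //; exact: sincere_is_strategy.
have [[c cD [cH cL]]|noC] := pselect (exists2 n, n \in D & contingent R (v n)).
  have [Bc Be] := pref_le c; rewrite !ler_norml in Bc Be.
  have := ltr_nat_subr_ge1 cL; have := ltr_nat_subr_ge1 cH.
  move: Bc Be => /andP[? ?] /andP[? ?] ? ?.
  by apply: contingent_gain_bounds (member_gain cD) => //; apply/andP; split; lra.
suff /andP[x0 y0] : shiftL <= 0 <= shiftH.
  by rewrite !ler_norml; split; apply/andP; split; nra.
have typeD n : n \in D -> friendly R (v n) \/ unfriendly R (v n).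
  by move=> nD; case: (agent_types n) => [|[|nC]]; [left|right|case: noC; exists n].
have [[f fD fF]|noF] := pselect (exists2 n, n \in D & friendly R (v n)).
  have [? [? ?]] := fF; have gf := member_gain fD.
  have [[u uD uU]|noU] := pselect (exists2 n, n \in D & unfriendly R (v n)).
    have [? [? ?]] := uU.
    by apply: opposite_gains_signs gf (member_gain uD); apply/andP; split; lra.
  have x0 : shiftL <= 0.
    apply: friendly_coalition_shiftL => n nD.
    by case: (typeD n nD) => // nU; case: noU; exists n.
  by rewrite x0; apply: gain_ge0_shift_ge0 x0 _ _ gf; lra.
have y0 : 0 <= shiftH.
  apply: unfriendly_coalition_shiftH => n nD.
  by case: (typeD n nD) => // nF; case: noF; exists n.
have [? [? ?]] : unfriendly R (v n0).
  by case: (typeD n0 n0D) => // n0F; case: noF; exists n0.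
by rewrite y0 andbT (gain_ge0_shift_le0 y0 _ _ (member_gain n0D)) //; lra.
Qed.

End Coalition.

Lemma sincere_strong_BNE :
  strong_BNE (2 * B%:R ^+ 2 * (1 - fidelity mu PL PH Psig Sg)) mu PL PH Psig v Sg.
Proof.
move=> [D [Sg' [Sg'_strat Sg'_out Sg'_weak [n0 n0D]]]].
have [xB yB] := coalition_shift_bounds Sg'_strat Sg'_out Sg'_weak n0D.
have [cB eB] := pref_le n0.
apply/negP; rewrite -leNgt addrC -lerBlDr exp_util_sub.
exact: gain_le xB yB cB eB.
Qed.

Lemma card_agent_types : (#|F|%:R + #|U|%:R + #|C|%:R : R) = N%:R.
Proof.
rewrite !card_sum_mem -!big_split /=.
rewrite (eq_bigr (fun=> 1)) ?sumr_const ?card_ord // => n _.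
exact: agent_type_indicator.
Qed.

Let card_friendly_bounds : aF * N%:R - 1 <= #|F|%:R <= aF * N%:R.
Proof.
case: hv => _ _ _ -> _; have := floorD1_gt (aF * N%:R).
by rewrite intrD floor_le andbT => ?; lra.
Qed.

Let card_unfriendly_bounds : aU * N%:R - 1 <= #|U|%:R <= aU * N%:R.
Proof.
case: hv => _ _ _ _ ->; have := floorD1_gt (aU * N%:R).
by rewrite intrD floor_le andbT => ?; lra.
Qed.

Definition contingent_deviation : 'I_N -> strategy R :=
  fun n => if n \in C then separating_strategy else Sg n.

Lemma contingent_deviationP n : is_strategy (contingent_deviation n).
Proof.
rewrite /contingent_deviation; case: ifP => _; first exact: separating_strategyP.
exact: sincere_is_strategy.
Qed.

Lemma voteA_contingent_deviation n w : voteA_prob Psig (contingent_deviation n) w =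
  (n \in C)%:R * voteA_prob Psig separating_strategy w + (n \in F)%:R.
Proof.
rewrite /contingent_deviation; case: (agent_types n) => [nF|[nU|nC]].
- rewrite (mem_agents nF) (nmem_agents (friendly_not_contingent nF)).
  by rewrite voteA_sincere_friendly // mul0r add0r.
- rewrite (nmem_agents (unfriendly_not_contingent nU)).
  rewrite (nmem_agents (fun nF => friendly_not_unfriendly nF nU)).
  by rewrite voteA_sincere_unfriendly // mul0r addr0.
- rewrite (mem_agents nC) (nmem_agents (fun nF => friendly_not_contingent nF nC)).
  by rewrite mul1r addr0.
Qed.

Lemma expected_votes_contingent_deviation w :
  `|\sum_n voteA_prob Psig (contingent_deviation n) w
     - N%:R * (aF + aC * voteA_prob Psig separating_strategy w)| <= 1.
Proof.
under eq_bigr do rewrite voteA_contingent_deviation.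
rewrite big_split /= -mulr_suml -!card_sum_mem.
have := card_agent_types; have aCE : aC = 1 - aF - aU.
  by case: hpar => _ _ _ _ [? ? ? ? _]; lra.
have /andP[? ?] := voteA_prob_ge0_le1 w separating_strategyP.
move: card_friendly_bounds card_unfriendly_bounds => /andP[? ?] /andP[? ?].
by rewrite aCE ler_norml => ?; apply/andP; split; nra.
Qed.

Local Notation devA w := (fun n => voteA_prob Psig (contingent_deviation n) w).

Let devA01 w n : 0 <= devA w n <= 1.
Proof. exact/voteA_prob_ge0_le1/contingent_deviationP. Qed.

Let votes_far w : 1 <= margin * N%:R ->
  E_bern (devA w)
      (fun S => if margin * N%:R <= `|#|S|%:R - \sum_n devA w n| then 1 else 0)
    <= (margin ^+ 2 * N%:R)^-1.
Proof.
move=> kN; have k0 := margin_gt0; have N0 : 0 < N%:R :> R by nra.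
apply: le_trans (E_bern_chebyshev (devA01 w) (lt_le_trans ltr01 kN)) _.
rewrite ler_pdivrMr ?exprn_gt0 ?(lt_le_trans ltr01 kN) //.
have -> : (margin ^+ 2 * N%:R)^-1 * (margin * N%:R) ^+ 2 = N%:R.
  by field; rewrite !gt_eqF.
apply: (le_trans (y := \sum_(n : 'I_N) 1)); last by rewrite sumr_const card_ord.
by apply: ler_sum => n _; have /andP[? ?] := devA01 w n; nra.
Qed.

Let mean_gap w : 1 <= margin * N%:R ->
  (if w is WH then (mu + margin) * N%:R <= \sum_n devA w n
   else \sum_n devA w n <= (mu - margin) * N%:R).
Proof.
move=> kN; have := expected_votes_contingent_deviation w.
by rewrite separating_share ler_norml; case: w => /andP[? ?]; nra.
Qed.

Lemma lambda_contingent_deviation_L : 1 <= margin * N%:R ->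
  lamA contingent_deviation WL <= (margin ^+ 2 * N%:R)^-1.
Proof.
move=> kN; rewrite lambda_OAE; apply: le_trans (votes_far WL kN).
apply: ler_E_bern => // S; rewrite /A_wins; case: ifP => win; last by case: ifP.
rewrite ifT // (le_trans _ (ler_norm _)) //.
by have := mean_gap WL kN; rewrite /=; lra.
Qed.

Lemma lambda_contingent_deviation_H : 1 <= margin * N%:R ->
  1 - lamA contingent_deviation WH <= (margin ^+ 2 * N%:R)^-1.
Proof.
move=> kN; rewrite lambda_OAE -{1}(E_bern_cst (devA WH) 1) -E_bernB.
apply: le_trans (votes_far WH kN); apply: ler_E_bern => // S.
rewrite /A_wins; case: ifP => win; first by rewrite subrr; case: ifP.
rewrite subr0 ifT // distrC (le_trans _ (ler_norm _)) //.
by have := mean_gap WH kN; move: win => /negbT; rewrite -ltNge /=; lra.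
Qed.

Lemma error_contingent_deviation : 1 <= margin * N%:R ->
  1 - fidelity mu PL PH Psig contingent_deviation <= (margin ^+ 2 * N%:R)^-1.
Proof.
move=> kN; rewrite fidelity_error.
have := ler_wpM2l (ltW PL_gt0) (lambda_contingent_deviation_L kN).
have := ler_wpM2l (ltW PH_gt0) (lambda_contingent_deviation_H kN).
by rewrite -[X in _ -> _ -> _ <= X]mul1r -PLH; lra.
Qed.

Lemma contingent_gain_ge (Sg' : 'I_N -> strategy R) n :
  (forall m, is_strategy (Sg' m)) -> contingent R (v n) ->
  (1 - fidelity mu PL PH Psig Sg) - B%:R * (1 - fidelity mu PL PH Psig Sg')
    <= exp_util mu PL PH Psig Sg' (v n) - exp_util mu PL PH Psig Sg (v n).
Proof.
move=> Sg'_strat [/ltr_nat_subr_ge1 cH /ltr_nat_subr_ge1 cL].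
rewrite exp_util_sub !fidelity_error.
have [] := pref_le n; rewrite !ler_norml => /andP[? ?] /andP[? ?].
have /andP[? ?] := lambda_OA_ge0_le1 WL sincere_is_strategy.
have /andP[? ?] := lambda_OA_ge0_le1 WH sincere_is_strategy.
have /andP[? ?] := lambda_OA_ge0_le1 WL Sg'_strat.
have /andP[? ?] := lambda_OA_ge0_le1 WH Sg'_strat.
have PL0 := ltW PL_gt0; have PH0 := ltW PH_gt0.
have : 0 <= PL * lamA Sg WL * (- prefL (v n) - 1) by rewrite !mulr_ge0 //; lra.
have : 0 <= PL * lamA Sg' WL * (B%:R + prefL (v n)) by rewrite !mulr_ge0 //; lra.
have : 0 <= PH * (1 - lamA Sg WH) * (prefH (v n) - 1) by rewrite !mulr_ge0 //; lra.
have : 0 <= PH * (1 - lamA Sg' WH) * (B%:R - prefH (v n)) by rewrite !mulr_ge0 //; lra.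
lra.
Qed.

Lemma error_le_of_strong_BNE eps : 1 <= margin * N%:R ->
  strong_BNE eps mu PL PH Psig v Sg ->
  1 - fidelity mu PL PH Psig Sg <= `|eps| + B%:R / margin ^+ 2 / N%:R.
Proof.
move=> kN BNE; rewrite leNgt; apply/negP => err_big; apply: BNE.
have N0 : 0 < N%:R :> R by have := margin_gt0; nra.
have gain n : n \in C -> `|eps| < exp_util mu PL PH Psig contingent_deviation (v n)
                                  - exp_util mu PL PH Psig Sg (v n).
  rewrite inE => /asboolP nC.
  apply: lt_le_trans (contingent_gain_ge contingent_deviationP nC).
  rewrite ltrBrDr; apply: le_lt_trans err_big; rewrite lerD2l.
  by have := ler_wpM2l (ler0n R B) (error_contingent_deviation kN); rewrite invfM mulrA.
have [n0 n0C] : exists n0, n0 \in C.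
  apply/set0Pn; rewrite -card_gt0 -(ltr0n R).
  have := mulr_gt0 aC_gt0 N0; have := card_agent_types.
  move: card_friendly_bounds card_unfriendly_bounds => /andP[? ?] /andP[? ?].
  by case: hpar => _ _ _ _ [? ? ? ? _] *; nra.
exists C, contingent_deviation; split.
- exact: contingent_deviationP.
- by move=> n s nC; rewrite /contingent_deviation (negbTE nC).
- by move=> n nC; have := gain n nC; have := normr_ge0 eps; lra.
- by exists n0 => //; have := gain n0 n0C; have := ler_norm eps; lra.
Qed.

End SincereProfile.

End VotingGame.

Import numFieldNormedType.Exports.
Local Open Scope classical_set_scope.

Lemma scaled_gap_cvg0 (R : realType) (f : nat -> R) (K : R) :
  f @ \oo --> (1 : R) -> K * (1 - f N) @[N --> \oo] --> (0 : R).
Proof.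
move=> f1; apply/cvgrPdist_lt => e e0.
have K1 : 0 < `|K| + 1 by rewrite ltr_wpDl.
apply: filterS ((cvgrPdist_lt _ _).1 f1 _ (divr_gt0 e0 K1)) => N /=.
rewrite sub0r normrN normrM ltr_pdivlMr // => close.
apply: le_lt_trans close.
by rewrite mulrC ler_wpM2l ?lerDl.
Qed.

Lemma cvg1_of_gap_le (R : realType) (f eps : nat -> R) (C : R) : 0 <= C ->
  (forall N, f N <= 1) -> eps @ \oo --> (0 : R) ->
  (\forall N \near \oo, 1 - f N <= `|eps N| + C / N%:R) -> f @ \oo --> (1 : R).
Proof.
move=> C0 f1 eps0 gap; apply/cvgrPdist_lt => e e0.
have e20 : 0 < e / 2 by rewrite divr_gt0.
near=> N.
have eps_small : `|eps N| < e / 2.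
  near: N; apply: filterS ((cvgrPdist_lt _ _).1 eps0 _ e20) => n.
  by rewrite sub0r normrN.
have N_large : C * 2 / e + 1 <= N%:R by near: N; exact: nbhs_infty_ger.
have N0 : 0 < N%:R :> R.
  by apply: lt_le_trans N_large; rewrite ltr_pwDr // !mulr_ge0 // invr_ge0 ltW.
have C_small : C / N%:R < e / 2.
  rewrite ltr_pdivrMr // -ltr_pdivrMl // mulrC.
  by apply: lt_le_trans N_large; rewrite invf_div mulrA ltrDl.
have gapN : 1 - f N <= `|eps N| + C / N%:R by near: N.
by rewrite ger0_norm ?subr_ge0 ?f1 //; lra.
Unshelve. all: by end_near.
Qed.

Theorem corollary4 (R : realType) (mu PL PH : R) (Psig : signal -> state -> R)
  (aF aU aC : R) (B : nat)
  (hpar : valid_params mu PL PH Psig aF aU aC)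
  (v : forall N : nat, 'I_N -> util)
  (hv : forall N, valid_instance B aF aU (v N))
  (Sg : forall N : nat, 'I_N -> strategy R)
  (hS : forall N, is_sincere PL PH Psig (v N) (Sg N)) :
  (fidelity mu PL PH Psig (Sg N) @[N --> \oo] --> (1 : R)) <->
  (exists eps : nat -> R, (eps @ \oo --> (0 : R)) /\
     forall N, strong_BNE (eps N) mu PL PH Psig (v N) (Sg N)).
Proof.
split=> [fid1|[eps [eps0 BNE]]].
  exists (fun N => 2 * B%:R ^+ 2 * (1 - fidelity mu PL PH Psig (Sg N))).
  split=> [|N]; first exact: scaled_gap_cvg0.
  exact (sincere_strong_BNE hpar (hv N) (hS N)).
have k0 := margin_gt0 hpar; set k := margin _ _ _ _ in k0 *.
apply: (cvg1_of_gap_le (C := B%:R / k ^+ 2) _ _ eps0).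
- by rewrite divr_ge0 ?exprn_ge0 // ltW.
- by move=> N; exact (fidelity_le1 hpar (sincere_is_strategy (hS N))).
near=> N; refine (error_le_of_strong_BNE hpar (hv N) (hS N) _ (BNE N)).
by rewrite -ler_pdivrMl // mulr1; near: N; exact: nbhs_infty_ger.
Unshelve. all: by end_near.
Qed.
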